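(* For every $q\ge2$, $\beta>0$ and every finite $d$-dimensional cube $V\subset\mathbb{Z}^d$, the Swendsen–Wang dynamics and the isolated vertices dynamics on the induced subgraph $G=(V,E)$ satisfy $\lambda(\boldsymbol{SW})\ge\lambda(\boldsymbol{I}_{\rm SW})$.
   Context: Potts measure with free boundary: $\pi(\sigma)\propto\exp(\beta\,\#\{(u,v)\in E:\sigma(u)=\sigma(v)\})$ on $\{1,\dots,q\}^V$; $p=1-e^{-\beta}$. Swendsen–Wang dynamics $\boldsymbol{SW}$: from $\sigma_t$, include each edge $(u,v)\in E$ with $\sigma_t(u)=\sigma_t(v)$ independently with probability $p$ to get $A_t\subseteq E$; assign each connected component of $(V,A_t)$ an independent uniform spin; discard edges. Isolated vertices dynamics $\boldsymbol{I}_{\rm SW}$: same first step, then assign an independent uniform spin only to each isolated vertex of $(V,A_t)$ (a vertex with no incident edge in $A_t$), leaving all other spins unchanged; discard edges. $\lambda(P)=1-\max\{|\lambda_2|,|\lambda_N|\}$ for a transition matrix reversible w.r.t. $\pi$ with eigenvalues $1=\lambda_1\ge\dots\ge\lambda_N$. *)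

From HB Require Import structures.
From mathcomp Require Import all_boot all_order all_algebra.
Set Implicit Arguments. Unset Strict Implicit. Unset Printing Implicit Defensive.
Import Order.TTheory GRing.Theory Num.Theory.
Local Open Scope ring_scope.

(* spin configurations sigma : T -> {1..q}, here represented by 'I_q *)
Definition config (T : finType) (q : nat) := {ffun T -> 'I_q}.

Definition mono_edges (T : finType) (q : nat) (E : {set {set T}})
    (sigma : {ffun T -> 'I_q}) : {set {set T}} :=
  [set e in E | [forall u in e, forall v in e, sigma u == sigma v]].

Definition edge_rel (T : finType) (A : {set {set T}}) : rel T :=
  fun u v => (u != v) && ([set u; v] \in A).

Definition isolated (T : finType) (A : {set {set T}}) (v : T) : bool :=
  [forall e in A, v \notin e].

(* probability that the percolation step (each monochromatic edge kept
   independently with prob. p) yields exactly A (for A a subset of mono) *)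
Definition perc_weight (R : numDomainType) (T : finType) (q : nat)
    (p : R) (E : {set {set T}}) (sigma : {ffun T -> 'I_q})
    (A : {set {set T}}) : R :=
  p ^+ #|A| * (1 - p) ^+ (#|mono_edges E sigma| - #|A|).

Definition SW_kernel (R : numFieldType) (T : finType) (q : nat) (p : R)
    (E : {set {set T}}) (sigma tau : {ffun T -> 'I_q}) : R :=
  \sum_(A in powerset (mono_edges E sigma))
    perc_weight p E sigma A *
    (if [forall u, forall v, connect (edge_rel A) u v ==> (tau u == tau v)]
     then (q%:R ^- n_comp (edge_rel A) predT)
     else 0).

Definition ISW_kernel (R : numFieldType) (T : finType) (q : nat) (p : R)
    (E : {set {set T}}) (sigma tau : {ffun T -> 'I_q}) : R :=
  \sum_(A in powerset (mono_edges E sigma))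
    perc_weight p E sigma A *
    (if [forall v, ~~ isolated A v ==> (tau v == sigma v)]
     then (q%:R ^- #|[set v | isolated A v]|)
     else 0).

(* matrix of a kernel on a finite state space S (rows = current state) *)
Definition kmx (R : Type) (S : finType) (K : S -> S -> R) : 'M[R]_#|S| :=
  \matrix_(i, j) K (enum_val i) (enum_val j).

(* lambda(P) = 1 - max(|lambda_2|, |lambda_N|) where
   lambda_1 >= ... >= lambda_N are the eigenvalues of P with multiplicity,
   i.e. the roots of the characteristic polynomial listed in decreasing order *)
Definition spectral_gap_of (R : rcfType) (n : nat) (P : 'M[R]_n) (g : R) :=
  exists s : seq R,
    [/\ char_poly P = \prod_(x <- s) ('X - x%:P),
        sorted >=%R s &
        g = 1 - Num.max `|nth 0 s 1| `|nth 0 s n.-1| ].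

Definition cube (d L : nat) := {ffun 'I_d -> 'I_L}.

Definition cube_adj (d L : nat) (u v : {ffun 'I_d -> 'I_L}) : bool :=
  [exists i, (((val (u i)).+1 == val (v i)) || ((val (v i)).+1 == val (u i)))
             && [forall j, (j != i) ==> (u j == v j)]].

Definition cube_edges (d L : nat) : {set {set {ffun 'I_d -> 'I_L}}} :=
  [set e | [exists u, exists v, cube_adj u v && (e == [set u; v])]].

(* Both chains are reversible for the Potts measure pi(s) ~ (1-p)^-#mono(s), and
   the Edwards--Sokal coupling writes pi(s) K(s,t) as a mixture over edge sets
   A, with weights (p/(1-p))^|A|, of uniform resamplings: SW redraws every
   cluster of A, I_SW only the isolated vertices of A.  For fixed A the SW term
   of the quadratic form <f, K f>_pi is q^-c(A) (sum of f over the colourings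
   constant on the clusters of A)^2, which is nonnegative and, by
   Cauchy--Schwarz over the finer I_SW classes, at most the I_SW term.  Thus
   0 <= SW <= I_SW as self-adjoint operators on L^2(pi): min-max gives
   lambda_2(SW) <= lambda_2(I_SW), and positivity of SW makes its gap
   1 - lambda_2(SW). *)

From HB Require Import structures.
From mathcomp Require Import all_boot all_order all_algebra.
From mathcomp Require Import ring lra.
From mathcomp Require Import perm sesquilinear spectral complex.
Import Order.TTheory GRing.Theory Num.Theory.
Local Open Scope ring_scope.

Set Implicit Arguments. Unset Strict Implicit. Unset Printing Implicit Defensive.

Lemma cauchy_schwarz_sum (R : realFieldType) (I : finType) (P : pred I) (x : I -> R) :
  (\sum_(i | P i) x i) ^+ 2 <= #|[set i | P i]|%:R * \sum_(i | P i) x i ^+ 2.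
Proof.
have card_sum : \sum_(i | P i) (1 : R) = #|[set i | P i]|%:R.
  by rewrite -sum1_card natr_sum; apply: eq_bigl => i; rewrite inE.
set N := #|_|%:R in card_sum *; set X := \sum_(i | P i) x i; set Y := \sum_(i | P i) x i ^+ 2.
have : 0 <= \sum_(i | P i) \sum_(j | P j) (x i - x j) ^+ 2.
  by do 2![apply: sumr_ge0 => ? _]; apply: sqr_ge0.
have -> : \sum_(i | P i) \sum_(j | P j) (x i - x j) ^+ 2 =
    \sum_(i | P i) \sum_(j | P j) (x i ^+ 2 + x j ^+ 2 - 2%:R * (x i * x j)).
  by apply: eq_bigr => i _; apply: eq_bigr => j _; ring.
under eq_bigr do rewrite sumrB big_split /=.
rewrite sumrB big_split /=.
have sum_sq : \sum_(i | P i) \sum_(j | P j) x j ^+ 2 = N * Y.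
  by rewrite -card_sum mulr_suml; apply: eq_bigr => i _; rewrite mul1r.
have -> : \sum_(i | P i) \sum_(j | P j) x i ^+ 2 = N * Y.
  by rewrite exchange_big.
have -> : \sum_(i | P i) \sum_(j | P j) 2 * (x i * x j) = 2 * X ^+ 2.
  rewrite expr2 big_distrl mulr_sumr; apply: eq_bigr => i _.
  by rewrite big_distrr mulr_sumr.
rewrite sum_sq; lra.
Qed.

Lemma char_poly_conj (F : fieldType) n (V A : 'M[F]_n) : V \in unitmx ->
  char_poly (invmx V *m A *m V) = char_poly A.
Proof.
move=> uV; rewrite /char_poly /char_poly_mx.
have -> : 'X%:M - map_mx polyC (invmx V *m A *m V) =
    map_mx polyC (invmx V) *m ('X%:M - map_mx polyC A) *m map_mx polyC V.
  rewrite mulmxBr mulmxBl !map_mxM; congr (_ - _).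
  by rewrite mul_mx_scalar -scalemxAl -map_mxM mulVmx // map_mx1 scalemx1.
by rewrite !det_mulmx mulrAC -det_mulmx -map_mxM mulVmx // map_mx1 det1 mul1r.
Qed.

Lemma spectral_gap_of_char_poly (R : rcfType) n (K M : 'M[R]_n) g :
  char_poly K = char_poly M -> spectral_gap_of M g -> spectral_gap_of K g.
Proof. by move=> KM [s [cpM ss gE]]; exists s; rewrite KM. Qed.

Local Open Scope sesquilinear_scope.

Section HermitianForms.
Variables (R : rcfType) (n : nat).
Local Notation C := R[i].
Local Notation rc := (real_complex R).

Definition hform (A : 'M[C]_n) (x : 'rV[C]_n) : C := (x *m A *m x ^t*) 0 0.

Lemma hform_diag (d x : 'rV[C]_n) :
  hform (diag_mx d) x = \sum_i d 0 i * `|x 0 i| ^+ 2.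
Proof.
rewrite /hform mxE; apply: eq_bigr => i _.
by rewrite mul_mx_diag !mxE normCK; ring.
Qed.

Lemma hform_conjmx (U A : 'M[C]_n) (x : 'rV[C]_n) :
  hform (U ^t* *m A *m U) x = hform A (x *m U ^t*).
Proof. by rewrite /hform trmx_mul map_mxM trmxCK !mulmxA. Qed.

Lemma hform1 (x : 'rV[C]_n) : hform 1%:M x = \sum_i `|x 0 i| ^+ 2.
Proof. by rewrite /hform mulmx1 mxE; apply: eq_bigr => i _; rewrite !mxE normCK. Qed.

Lemma hform1_unitary (U : 'M[C]_n) (x : 'rV[C]_n) : U ^t* *m U = 1%:M ->
  hform 1%:M (x *m U ^t*) = hform 1%:M x.
Proof. by move=> UU; rewrite -hform_conjmx mulmx1 UU. Qed.

Lemma sym_spectral (M : 'M[R]_n) : M^T = M ->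
  exists (U : 'M[C]_n) (r : 'I_n -> R),
   [/\ U ^t* *m U = 1%:M,
       char_poly M = \prod_i ('X - (r i)%:P) &
       forall x, hform (map_mx rc M) x = \sum_i rc (r i) * `|(x *m U ^t*) 0 i| ^+ 2].
Proof.
move=> Msym; set MC := map_mx rc M.
have herm : MC \is hermsymmx.
  apply/is_hermitianmxP; rewrite expr0 scale1r; apply/matrixP => i j.
  rewrite !mxE conj_Creal; last by apply/complex_realP; eexists.
  by have /matrixP /(_ i j) := Msym; rewrite mxE => ->.
have /orthomx_spectralP Meq := hermitian_normalmx herm.
set U := spectralmx MC in Meq; set d := spectral_diag MC in Meq.
have Uu : U \is unitarymx by apply: spectral_unitarymx.
have UUt : U *m U ^t* = 1%:M by apply/unitarymxP.
have d_real : d \is a realmx by apply: hermitian_spectral_diag_real.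
pose r i := complex.Re (d 0 i).
have rE i : rc (r i) = d 0 i by apply: RRe_real; apply: (mxOverP d_real).
exists U, r; split; first exact: mulmx1C.
  apply: (@map_poly_inj _ _ rc).
  rewrite map_char_poly -/MC Meq char_poly_conj ?unitarymx_unit //.
  rewrite char_poly_trig ?diag_mx_is_trig // rmorph_prod /=.
  by apply: eq_bigr => i _; rewrite map_polyXsubC /= rE mxE eqxx mulr1n.
move=> x; rewrite Meq invmx_unitary // hform_conjmx hform_diag.
by apply: eq_bigr => i _; rewrite rE.
Qed.

Definition rform (M : 'M[R]_n) (a : 'I_n -> R) := \sum_i \sum_j M i j * (a i * a j).

Lemma Re_sum (I : Type) (r : seq I) (P : pred I) (F : I -> C) :
  complex.Re (\sum_(i <- r | P i) F i) = \sum_(i <- r | P i) complex.Re (F i).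
Proof. by apply: (big_morph (@complex.Re R)) => // [[x1 y1] [x2 y2]]. Qed.

Lemma Im_sum (I : Type) (r : seq I) (P : pred I) (F : I -> C) :
  complex.Im (\sum_(i <- r | P i) F i) = \sum_(i <- r | P i) complex.Im (F i).
Proof. by apply: (big_morph (@complex.Im R)) => // [[x1 y1] [x2 y2]]. Qed.

Lemma mul_rc_conjC (z w : C) (m : R) :
  z * rc m * w^* = Complex (m * (complex.Re z * complex.Re w + complex.Im z * complex.Im w))
                           (m * (complex.Im z * complex.Re w - complex.Re z * complex.Im w)).
Proof.
case: z => a b; case: w => c d.
have -> : (Complex a b : C) * rc m = Complex (a * m) (b * m).
  by apply/eqP; rewrite eq_complex /=; apply/andP; split; apply/eqP; ring.
by apply/eqP; rewrite eq_complex /=; apply/andP; split; apply/eqP; ring.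
Qed.

(* The imaginary parts cancel by symmetry of [M]. *)
Lemma hform_real_sym (M : 'M[R]_n) : M^T = M -> forall x : 'rV[C]_n,
  hform (map_mx rc M) x =
  rc (rform M (fun i => complex.Re (x 0 i)) + rform M (fun i => complex.Im (x 0 i))).
Proof.
move=> Msym x.
have Ms i j : M i j = M j i by have /matrixP /(_ j i) := Msym; rewrite mxE.
have -> : hform (map_mx rc M) x = \sum_i \sum_j x 0 j * rc (M j i) * (x 0 i)^*.
  rewrite /hform mxE; apply: eq_bigr => i _; rewrite !mxE big_distrl /=.
  by apply: eq_bigr => j _; rewrite !mxE.
under eq_bigr do under eq_bigr do rewrite mul_rc_conjC.
apply/eqP; rewrite eq_complex; apply/andP; split; apply/eqP.
  rewrite Re_sum /=; under eq_bigr do rewrite Re_sum /=.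
  rewrite /rform -big_split /=; apply: eq_bigr => i _.
  rewrite -big_split /=; apply: eq_bigr => j _.
  by rewrite (Ms i j); ring.
rewrite Im_sum /=; under eq_bigr do rewrite Im_sum /=.
set a := fun i => complex.Re (x 0 i); set b := fun i => complex.Im (x 0 i).
have -> : \sum_i \sum_j M j i * (b j * a i - a j * b i) =
         \sum_i \sum_j M j i * (b j * a i) - \sum_i \sum_j M j i * (a j * b i).
  rewrite -sumrB; apply: eq_bigr => i _; rewrite -sumrB; apply: eq_bigr => j _; ring.
rewrite exchange_big /=; apply/eqP; rewrite subr_eq0; apply/eqP.
by apply: eq_bigr => i _; apply: eq_bigr => j _; rewrite (Ms i j); ring.
Qed.

Lemma row_unitary_coord (U : 'M[C]_n) (i k : 'I_n) : U *m U ^t* = 1%:M ->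
  (row i U *m U ^t*) 0 k = (i == k)%:R.
Proof. by move=> UU; rewrite -row_mul UU !mxE. Qed.

Lemma eigen_ge0 (U : 'M[C]_n) (r : 'I_n -> R) (Q : 'rV[C]_n -> C) :
  U ^t* *m U = 1%:M ->
  (forall x, Q x = \sum_i rc (r i) * `|(x *m U ^t*) 0 i| ^+ 2) ->
  (forall x, 0 <= Q x) -> forall j, 0 <= r j.
Proof.
move=> UU QE Q_ge0 j; have UU' : U *m U ^t* = 1%:M by apply: mulmx1C.
have := Q_ge0 (row j U); rewrite QE (bigD1 j) //= big1 => [|k kj]; last first.
  by rewrite row_unitary_coord // eq_sym (negbTE kj) normr0 expr0n mulr0.
by rewrite row_unitary_coord // eqxx normr1 expr1n mulr1 addr0 ler0c.
Qed.

Lemma sum_two_coords (f : 'I_n -> C) (a b : C) (i0 i1 : 'I_n) : i0 != i1 ->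
  \sum_k f k * `|a * (i0 == k)%:R + b * (i1 == k)%:R| ^+ 2 =
  f i0 * `|a| ^+ 2 + f i1 * `|b| ^+ 2.
Proof.
move=> i01; rewrite (bigD1 i0) //= (bigD1 i1) /=; last by rewrite eq_sym.
rewrite big1 ?addr0; last first.
  move=> k /andP [k1 k0]; rewrite ![_ == k]eq_sym (negbTE k1) (negbTE k0).
  by rewrite !mulr0 addr0 normr0 expr0n mulr0.
by rewrite eqxx (negbTE i01) eq_sym (negbTE i01) eqxx !mulr0 !mulr1 addr0 add0r.
Qed.

Lemma exists_nontrivial_combination (c0 c1 : C) :
  exists a b : C, 0 < `|a| ^+ 2 + `|b| ^+ 2 /\ a * c0 + b * c1 = 0.
Proof.
have [->|c0_neq0] := eqVneq c0 0.
  by exists 1, 0; rewrite normr1 normr0 expr1n expr0n /= addr0 mul0r addr0 mulr0 ltr01.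
exists c1, (- c0); split; last by rewrite mulNr mulrC subrr.
by rewrite ltr_wpDl ?exprn_ge0 ?exprn_gt0 // normr_gt0 oppr_eq0.
Qed.

(* Min-max: a vector in the span of two eigenvectors of the smaller form and
   orthogonal to the top eigenvector of the larger one. *)
Lemma minmax_second_le (U1 U2 : 'M[C]_n) (r1 r2 : 'I_n -> R) (Q1 Q2 : 'rV[C]_n -> C)
  (U1U : U1 ^t* *m U1 = 1%:M) (U2U : U2 ^t* *m U2 = 1%:M)
  (Q1E : forall x, Q1 x = \sum_i rc (r1 i) * `|(x *m U1 ^t*) 0 i| ^+ 2)
  (Q2E : forall x, Q2 x = \sum_i rc (r2 i) * `|(x *m U2 ^t*) 0 i| ^+ 2)
  (Q12 : forall x, Q1 x <= Q2 x)
  {i0 i1 : 'I_n} (i01 : i0 != i1) (r1_le : r1 i1 <= r1 i0)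
  {j0 : 'I_n} {l2 : R} (r2_le : forall j, j != j0 -> r2 j <= l2) :
  r1 i1 <= l2.
Proof.
have U1U' : U1 *m U1 ^t* = 1%:M by apply: mulmx1C.
have [a [b [N_gt0 orth]]] := exists_nontrivial_combination
  ((row i0 U1 *m U2 ^t*) 0 j0) ((row i1 U1 *m U2 ^t*) 0 j0).
pose x := a *: row i0 U1 + b *: row i1 U1; set N := _ + _ in N_gt0.
have x1E k : (x *m U1 ^t*) 0 k = a * (i0 == k)%:R + b * (i1 == k)%:R.
  by rewrite /x mulmxDl -!scalemxAl [LHS]mxE ![fun_of_matrix (_ *: _) _ _]mxE !row_unitary_coord.
have x2j0 : (x *m U2 ^t*) 0 j0 = 0.
  by rewrite /x mulmxDl -!scalemxAl [LHS]mxE ![fun_of_matrix (_ *: _) _ _]mxE.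
have normx : \sum_k `|(x *m U2 ^t*) 0 k| ^+ 2 = N.
  rewrite -hform1 hform1_unitary // -(hform1_unitary x U1U) hform1.
  transitivity (\sum_k 1 * `|a * (i0 == k)%:R + b * (i1 == k)%:R| ^+ 2).
    by apply: eq_bigr => k _; rewrite x1E mul1r.
  by rewrite sum_two_coords // !mul1r.
have lb : rc (r1 i1) * N <= Q1 x.
  rewrite Q1E; under eq_bigr do rewrite x1E.
  rewrite sum_two_coords // mulrDr lerD2r ler_wpM2r ?exprn_ge0 //.
  by rewrite lecR.
have ub : Q2 x <= rc l2 * N.
  rewrite Q2E -normx mulr_sumr; apply: ler_sum => k _.
  have [->|nk] := eqVneq k j0; first by rewrite x2j0 normr0 expr0n !mulr0.
  by rewrite ler_wpM2r ?exprn_ge0 // lecR r2_le.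
by have := le_trans lb (le_trans (Q12 x) ub); rewrite ler_pM2r // lecR.
Qed.

End HermitianForms.

Section SpectralGap.
Variables (R : rcfType) (n : nat).

(* Conjugating by diag(sqrt w) turns a w-reversible matrix into a symmetric one. *)
Lemma reversible_symmetrization (K : 'M[R]_n) (w : 'I_n -> R)
    (w_gt0 : forall i, 0 < w i) (rev : forall i j, w i * K i j = w j * K j i) :
  exists M : 'M[R]_n, [/\ M^T = M, char_poly K = char_poly M &
     forall a, rform M a = \sum_i \sum_j (w i * K i j) *
                           (a i / Num.sqrt (w i) * (a j / Num.sqrt (w j)))].
Proof.
pose d i := Num.sqrt (w i).
have d_neq0 i : d i != 0 by rewrite lt0r_neq0 // sqrtr_gt0.
have dd i : d i * d i = w i by rewrite -expr2 sqr_sqrtr // ltW.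
pose D := diag_mx (\row_i (d i)^-1).
have DV : D *m diag_mx (\row_i d i) = 1%:M.
  apply/matrixP => i j; rewrite mul_diag_mx !mxE.
  by case: (eqVneq i j) => [->|_]; rewrite ?mulr1n ?mulVf ?mulr0n ?mulr0.
have uD : D \in unitmx by case: (mulmx1_unit DV).
have iD : invmx D = diag_mx (\row_i d i) by rewrite -[invmx D]mulmx1 -DV mulmxA mulVmx // mul1mx.
pose M := invmx D *m K *m D.
have ME i j : M i j = (w i * K i j) / (d i * d j).
  rewrite /M iD mul_mx_diag mul_diag_mx !mxE -dd.
  move: (d_neq0 i) (d_neq0 j) (K i j); generalize (d i) (d j) => x y hx hy k.
  by field; rewrite hx hy.
exists M; split.
- by apply/matrixP => i j; rewrite mxE !ME (rev j i) (mulrC (d j)).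
- by rewrite /M char_poly_conj.
- by move=> a; apply: eq_bigr => i _; apply: eq_bigr => j _; rewrite ME invfM; ring.
Qed.

Lemma sort_eigenvalues (r : 'I_n -> R) : exists (s : seq R) (sg : {perm 'I_n}),
  [/\ \prod_i ('X - (r i)%:P) = \prod_(x <- s) ('X - x%:P), sorted >=%R s,
      size s = n & forall k : 'I_n, nth 0 s k = r (sg k)].
Proof.
pose t := [tuple r i | i < n]; pose s := sort >=%R t.
have st : perm_eq s t by rewrite perm_sort.
have [sg sE] := tuple_permP st.
exists s, sg; split.
- by rewrite (perm_big _ st) /= big_map big_enum.
- by apply: sort_sorted => x y; rewrite orbC le_total.
- by rewrite size_sort size_tuple.
- move=> k; rewrite sE -(tnth_nth 0 [tuple tnth t (sg i) | i < n] k).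
  by rewrite !tnth_mktuple.
Qed.

Lemma sorted_nth_ge (s : seq R) (k l : nat) : sorted >=%R s -> (k <= l < size s)%N ->
  nth 0 s l <= nth 0 s k.
Proof.
move=> ss /andP [kl ls].
apply: (sorted_leq_nth (fun _ _ _ h1 h2 => le_trans h2 h1) (@lexx _ _) 0 ss) => //.
by rewrite inE (leq_ltn_trans kl ls).
Qed.

Lemma gap_le_of_second_le (s1 s2 : seq R) : (1 < n)%N ->
  sorted >=%R s1 -> size s1 = n -> 0 <= nth 0 s1 n.-1 ->
  nth 0 s1 1 <= nth 0 s2 1 ->
  1 - Num.max `|nth 0 s2 1| `|nth 0 s2 n.-1| <=
  1 - Num.max `|nth 0 s1 1| `|nth 0 s1 n.-1|.
Proof.
move=> n_gt1 ss1 sz1 last_ge0 second_le; rewrite lerD2l lerN2.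
have le_second : nth 0 s1 n.-1 <= nth 0 s1 1.
  by apply: sorted_nth_ge; rewrite // sz1 ltn_predL (ltnW n_gt1) andbT -subn1 subn_gt0.
have second_ge0 := le_trans last_ge0 le_second.
rewrite (ger0_norm second_ge0) (ger0_norm last_ge0) (max_idPl le_second).
by rewrite le_max (le_trans second_le (ler_norm _)).
Qed.

Local Notation rc := (real_complex R).

Lemma sym_gap_le (n_gt1 : (1 < n)%N) (M1 M2 : 'M[R]_n) :
  M1^T = M1 -> M2^T = M2 ->
  (forall a, 0 <= rform M1 a) -> (forall a, rform M1 a <= rform M2 a) ->
  exists g1 g2 : R, [/\ spectral_gap_of M1 g1, spectral_gap_of M2 g2 & g2 <= g1].
Proof.
move=> M1s M2s psd1 le12.
pose Q1 := hform (map_mx rc M1); pose Q2 := hform (map_mx rc M2).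
have Q12 x : Q1 x <= Q2 x by rewrite /Q1 /Q2 !hform_real_sym // lecR lerD.
have [U1 [r1 [U1U cp1 Q1E]]] := sym_spectral M1s.
have [U2 [r2 [U2U cp2 Q2E]]] := sym_spectral M2s.
have Q1_ge0 x : 0 <= Q1 x by rewrite /Q1 hform_real_sym // ler0c addr_ge0.
have r1_ge0 := eigen_ge0 U1U Q1E Q1_ge0.
have [s1 [sg1 [ps1 ss1 sz1 nth1]]] := sort_eigenvalues r1.
have [s2 [sg2 [ps2 ss2 sz2 nth2]]] := sort_eigenvalues r2.
pose k0 : 'I_n := Ordinal (ltnW n_gt1); pose k1 : 'I_n := Ordinal n_gt1.
have n_pred : (n.-1 < n)%N by rewrite ltn_predL ltnW.
pose kl : 'I_n := Ordinal n_pred.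
have second_le : nth 0 s1 1 <= nth 0 s2 1.
  have k01 : sg1 k0 != sg1 k1 by rewrite (inj_eq perm_inj) -val_eqE.
  have r1_le : r1 (sg1 k1) <= r1 (sg1 k0).
    by rewrite -(nth1 k0) -(nth1 k1); apply: sorted_nth_ge; rewrite // sz1.
  have r2_le j : j != sg2 k0 -> r2 j <= r2 (sg2 k1).
    rewrite -{1}(permKV sg2 j) (inj_eq perm_inj) -val_eqE /= => j_neq0.
    rewrite -[j](permKV sg2) -nth2 -(nth2 k1).
    by apply: sorted_nth_ge; rewrite // sz2 ltn_ord andbT lt0n.
  rewrite (nth1 k1) (nth2 k1).
  exact: (minmax_second_le U1U U2U Q1E Q2E Q12 k01 r1_le r2_le).
have last_ge0 : 0 <= nth 0 s1 n.-1 by have -> := nth1 kl; apply: r1_ge0.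
exists (1 - Num.max `|nth 0 s1 1| `|nth 0 s1 n.-1|),
       (1 - Num.max `|nth 0 s2 1| `|nth 0 s2 n.-1|); split.
- by exists s1; rewrite cp1 ps1.
- by exists s2; rewrite cp2 ps2.
- exact: gap_le_of_second_le.
Qed.

Lemma reversible_gap_le (n_gt1 : (1 < n)%N) (K1 K2 : 'M[R]_n) (w : 'I_n -> R)
    (w_gt0 : forall i, 0 < w i)
    (rev1 : forall i j, w i * K1 i j = w j * K1 j i)
    (rev2 : forall i j, w i * K2 i j = w j * K2 j i) :
  (forall a, 0 <= \sum_i \sum_j (w i * K1 i j) * (a i * a j)) ->
  (forall a, \sum_i \sum_j (w i * K1 i j) * (a i * a j) <=
             \sum_i \sum_j (w i * K2 i j) * (a i * a j)) ->
  exists g1 g2 : R, [/\ spectral_gap_of K1 g1, spectral_gap_of K2 g2 & g2 <= g1].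
Proof.
move=> psd1 le12.
have [M1 [M1s cp1 M1E]] := reversible_symmetrization w_gt0 rev1.
have [M2 [M2s cp2 M2E]] := reversible_symmetrization w_gt0 rev2.
have psdM1 a : 0 <= rform M1 a by rewrite M1E; apply: psd1.
have leM12 a : rform M1 a <= rform M2 a by rewrite M1E M2E; apply: le12.
have [g1 [g2 [gap1 gap2 g21]]] := sym_gap_le n_gt1 M1s M2s psdM1 leM12.
exists g1, g2; split => //.
- exact: spectral_gap_of_char_poly cp1 gap1.
- exact: spectral_gap_of_char_poly cp2 gap2.
Qed.

End SpectralGap.

Local Close Scope sesquilinear_scope.

Section Clusters.
Variables (T : finType) (q : nat).
Local Notation S := {ffun T -> 'I_q}.
Implicit Types (A E : {set {set T}}) (s t r : S).

Definition compatible A s :=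
  [forall u, forall v, connect (edge_rel A) u v ==> (s u == s v)].

Definition agree_off_isolated A s t :=
  [forall v, ~~ isolated A v ==> (t v == s v)].

Definition n_clusters A := n_comp (edge_rel A) predT.

Definition n_isolated A := #|[set v | isolated A v]|.

Lemma edge_rel_sym A : symmetric (edge_rel A).
Proof. by move=> u v; rewrite /edge_rel eq_sym setUC. Qed.

Lemma compatible_edges A s :
  (forall x y, edge_rel A x y -> s x = s y) -> compatible A s.
Proof.
move=> Hs; apply/forallP => u; apply/forallP => v; apply/implyP.
case/connectP => pth + ->; elim: pth u => [|x pth IH] u //=.
by case/andP => /Hs -> /IH.
Qed.

Lemma compatible_connect A s u v :
  compatible A s -> connect (edge_rel A) u v -> s u = s v.
Proof. by move=> /forallP /(_ u) /forallP /(_ v) /implyP H /H /eqP. Qed.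

Lemma mono_edges_sub E s : mono_edges E s \subset E.
Proof. by apply/subsetP => e; rewrite inE => /andP []. Qed.

Lemma sub_mono_edgesE E s :
  (forall e, e \in E -> exists u v, u != v /\ e = [set u; v]) ->
  forall A, A \subset E -> (A \subset mono_edges E s) = compatible A s.
Proof.
move=> hE A AE; apply/idP/idP => [Am|cs].
  apply: compatible_edges => x y /andP [_ xyA].
  have := subsetP Am _ xyA; rewrite inE => /andP [_ /forallP /(_ x)].
  rewrite !inE eqxx => /forallP /(_ y); rewrite !inE eqxx orbT.
  by move/eqP.
apply/subsetP => e eA; have eE := subsetP AE _ eA; rewrite inE eE.
have [u [v [nuv De]]] := hE _ eE.
have suv : s u = s v.
  by apply: (compatible_connect cs); apply: connect1; rewrite /edge_rel nuv -De.
apply/forallP => x; apply/implyP; rewrite De !inE => /orP [] /eqP ->;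
by apply/forallP => y; apply/implyP; rewrite !inE => /orP [] /eqP ->; rewrite ?suv.
Qed.

Lemma edge_rel_nonisolated A x y :
  edge_rel A x y -> ~~ isolated A x /\ ~~ isolated A y.
Proof.
case/andP => _ xyA; split; apply/negP => /forallP /(_ [set x; y]);
by rewrite xyA !inE eqxx ?orbT.
Qed.

Lemma agree_compatible A s t :
  compatible A s -> agree_off_isolated A s t -> compatible A t.
Proof.
move=> cs st; apply: compatible_edges => x y exy.
have [nx ny] := edge_rel_nonisolated exy.
have := forallP st x; rewrite nx => /eqP ->.
have := forallP st y; rewrite ny => /eqP ->.
by apply: (compatible_connect cs); apply: connect1.
Qed.

Lemma agree_sym A s t : agree_off_isolated A s t = agree_off_isolated A t s.
Proof. by apply/forallP/forallP => H v; rewrite eq_sym; apply: H. Qed.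

Lemma agree_trans A s t r :
  agree_off_isolated A s t -> agree_off_isolated A t r -> agree_off_isolated A s r.
Proof.
move=> st tr; apply/forallP => v; apply/implyP => nv.
by have := forallP st v; have := forallP tr v; rewrite nv => /eqP -> /eqP ->.
Qed.

(* A compatible colouring is determined by its values on the roots of the clusters. *)
Lemma card_compatible_le A :
  (#|[set s | compatible A s]| <= q ^ n_clusters A)%N.
Proof.
set e := edge_rel A.
have sym : connect_sym e by apply: sym_connect_sym; apply: edge_rel_sym.
pose f s : {ffun {x : T | roots e x} -> 'I_q} := [ffun x => s (val x)].
rewrite -(card_in_imset (f := f)); last first.
  move=> s1 s2; rewrite !inE => c1 c2 Hf; apply/ffunP => v.
  have := congr1 (fun g : {ffun {x : T | roots e x} -> 'I_q} =>
    g (exist _ (fingraph.root e v) (roots_root sym v))) Hf.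
  rewrite !ffunE /= -(compatible_connect c1 (connect_root e v)).
  by rewrite -(compatible_connect c2 (connect_root e v)).
apply: leq_trans (max_card _) _.
rewrite card_ffun card_ord card_sig /n_clusters /n_comp_mem.
by apply: eq_leq; congr (_ ^ _)%N; apply: eq_card => x; rewrite !inE andbT.
Qed.

Lemma card_agree A t :
  #|[set s | agree_off_isolated A t s]| = (q ^ n_isolated A)%N.
Proof.
pose I := [set v | isolated A v].
pose f (g : {ffun {x : T | x \in I} -> 'I_q}) : S :=
  [ffun v => if insub v is Some x then g x else t v].
have f_inj : injective f.
  move=> g1 g2 H; apply/ffunP => x.
  by have := congr1 (fun s : S => s (val x)) H; rewrite !ffunE valK.
have -> : [set s | agree_off_isolated A t s] = f @: setT.
  apply/setP => s; rewrite inE; apply/idP/imsetP => [ts|[g _ ->]].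
    exists [ffun x => s (val x)] => //; apply/ffunP => v.
    rewrite ffunE; case: insubP => [x _ <-|nI]; first by rewrite ffunE.
    by have := forallP ts v; move: nI; rewrite inE => -> /eqP.
  apply/forallP => v; apply/implyP => nv.
  by rewrite ffunE insubN // inE.
rewrite card_imset // cardsT card_ffun card_ord card_sig.
by congr (_ ^ _)%N; apply: eq_card => x; rewrite !inE.
Qed.

End Clusters.

Section ClusterForm.
Variables (R : realFieldType) (T : finType) (q : nat) (A : {set {set T}}).
Hypothesis q_gt0 : (0 < q)%N.
Local Notation S := {ffun T -> 'I_q}.

Lemma sum_agree_classes (F : S -> R) :
  \sum_(s | compatible A s) \sum_(t | agree_off_isolated A s t) F t =
  (q ^ n_isolated A)%:R * \sum_(t | compatible A t) F t.
Proof.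
rewrite (exchange_big_dep (compatible A)) /=; last exact: agree_compatible.
rewrite mulr_sumr; apply: eq_bigr => t ct.
rewrite -(card_agree A t) mulr_natl -sumr_const; apply: eq_bigl => s.
rewrite inE agree_sym; apply/andP/idP => [[] //|ts]; split => //.
exact: agree_compatible ct ts.
Qed.

(* Cauchy--Schwarz applied to the sums of [a] over the agreement classes, of
   which there are at most [q ^ n_clusters A]. *)
Lemma cluster_form_le (a : S -> R) :
  q%:R ^- n_clusters A * (\sum_(s | compatible A s) a s) ^+ 2 <=
  q%:R ^- n_isolated A *
    \sum_(s | compatible A s) \sum_(t | agree_off_isolated A s t) a s * a t.
Proof.
pose g s := \sum_(t | agree_off_isolated A s t) a t.
pose m : R := (q ^ n_isolated A)%:R.
have m_gt0 : 0 < m by rewrite ltr0n expn_gt0 q_gt0.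
have g_agree s t : agree_off_isolated A s t -> g s = g t.
  move=> st; apply: eq_bigl => r; apply/idP/idP => [sr|]; last exact: agree_trans.
  by apply: agree_trans sr; rewrite agree_sym.
have sum_g : \sum_(s | compatible A s) g s = m * \sum_(s | compatible A s) a s.
  exact: sum_agree_classes.
have sum_g2 : \sum_(s | compatible A s) g s ^+ 2 =
              m * \sum_(s | compatible A s) a s * g s.
  rewrite -sum_agree_classes; apply: eq_bigr => s _.
  by rewrite expr2 {1}/g big_distrl; apply: eq_bigr => t /g_agree ->.
have card_le : #|[set s : S | compatible A s]|%:R <= (q ^ n_clusters A)%:R :> R.
  by rewrite ler_nat card_compatible_le.
have CS := cauchy_schwarz_sum (compatible A) g; rewrite sum_g sum_g2 in CS.
have -> : \sum_(s | compatible A s) \sum_(t | agree_off_isolated A s t) a s * a t =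
          \sum_(s | compatible A s) a s * g s.
  by apply: eq_bigr => s _; rewrite mulr_sumr.
have mY_ge0 : 0 <= m * \sum_(s | compatible A s) a s * g s.
  by rewrite -sum_g2; apply: sumr_ge0 => s _; apply: sqr_ge0.
have Q_gt0 : 0 < (q ^ n_clusters A)%:R :> R by rewrite ltr0n expn_gt0 q_gt0.
rewrite -!natrX -/m mulrC ler_pdivrMr // -mulrA mulrC ler_pdivlMr //.
set X := \sum_(s | _) a s in CS *; set Y := \sum_(s | _) _ * _ in CS mY_ge0 *.
set N := #|_|%:R in CS card_le.
have Y_ge0 : 0 <= Y by rewrite -(pmulr_rge0 _ m_gt0).
apply: (@le_trans _ _ (N * Y)); last by rewrite [Y * _]mulrC ler_wpM2r.
rewrite -(ler_pM2l m_gt0) [m * (N * Y)]mulrCA.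
by have -> : m * (X ^+ 2 * m) = (m * X) ^+ 2 by rewrite exprMn mulrC -mulrA -expr2 mulrC.
Qed.

End ClusterForm.

Section EdwardsSokal.
Variables (R : realFieldType) (T : finType) (q : nat) (p : R) (E : {set {set T}}).
Hypothesis hE : forall e, e \in E -> exists u v, u != v /\ e = [set u; v].
Hypotheses (hp0 : 0 < p) (hp1 : p < 1).
Local Notation S := {ffun T -> 'I_q}.
Implicit Types (A : {set {set T}}) (s t : S).

(* The Potts weight exp(beta #mono) up to normalisation, since e^beta = 1/(1-p). *)
Definition potts_weight s : R := ((1 - p) ^+ #|mono_edges E s|)^-1.

Definition edge_weight A : R := p ^+ #|A| / (1 - p) ^+ #|A|.

Lemma potts_weight_gt0 s : 0 < potts_weight s.
Proof. by rewrite invr_gt0 exprn_gt0 // subr_gt0. Qed.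

Lemma edge_weight_ge0 A : 0 <= edge_weight A.
Proof. by rewrite divr_ge0 // exprn_ge0 // ?subr_ge0 ltW. Qed.

Lemma potts_weight_perc s A : A \subset mono_edges E s ->
  potts_weight s * perc_weight p E s A = edge_weight A.
Proof.
move=> Am; rewrite /potts_weight /perc_weight /edge_weight.
rewrite -{1}(subnKC (subset_leq_card Am)) exprD.
have onep_neq0 : 1 - p != 0 by rewrite subr_eq0 eq_sym lt_eqF.
set x := (1 - p) ^+ #|A|; set y := (1 - p) ^+ (_ - _).
have y_neq0 : y != 0 by rewrite expf_neq0.
by rewrite invfM [p ^+ _ * y]mulrC mulrA mulfVK // mulrC.
Qed.

Lemma joint_weight (b : {set {set T}} -> bool) (c : {set {set T}} -> R) s :
  potts_weight s * (\sum_(A in powerset (mono_edges E s))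
     perc_weight p E s A * (if b A then c A else 0)) =
  \sum_(A in powerset E) edge_weight A * ((compatible A s && b A)%:R * c A).
Proof.
rewrite mulr_sumr big_mkcond [RHS]big_mkcond; apply: eq_bigr => A _.
rewrite !powersetE; have [AE|nAE] := boolP (A \subset E); last first.
  rewrite ifF //; apply: contraNF nAE => Am.
  exact: subset_trans Am (mono_edges_sub E s).
rewrite -(sub_mono_edgesE s hE AE); case: ifP => Am; last by rewrite mul0r mulr0.
by rewrite [LHS]mulrA potts_weight_perc //; case: (b A); rewrite ?mul1r ?mul0r ?mulr0.
Qed.

Lemma SW_joint s t : potts_weight s * SW_kernel p E s t =
  \sum_(A in powerset E)
    edge_weight A * ((compatible A s && compatible A t)%:R * q%:R ^- n_clusters A).
Proof.
exact: (joint_weight (fun A => compatible A t) (fun A => q%:R ^- n_clusters A)).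
Qed.

Lemma ISW_joint s t : potts_weight s * ISW_kernel p E s t =
  \sum_(A in powerset E) edge_weight A *
    ((compatible A s && agree_off_isolated A s t)%:R * q%:R ^- n_isolated A).
Proof.
exact: (joint_weight (fun A => agree_off_isolated A s t) (fun A => q%:R ^- n_isolated A)).
Qed.

Lemma SW_reversible s t :
  potts_weight s * SW_kernel p E s t = potts_weight t * SW_kernel p E t s.
Proof. by rewrite !SW_joint; apply: eq_bigr => A _; rewrite andbC. Qed.

Lemma ISW_reversible s t :
  potts_weight s * ISW_kernel p E s t = potts_weight t * ISW_kernel p E t s.
Proof.
rewrite !ISW_joint; apply: eq_bigr => A _.
suff -> : compatible A s && agree_off_isolated A s t =
          compatible A t && agree_off_isolated A t s by [].
rewrite [agree_off_isolated A s t]agree_sym.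
by apply/andP/andP => [] [c st]; split => //; apply: agree_compatible c _;
  rewrite // agree_sym.
Qed.

Definition pi_form (K : S -> S -> R) (a : S -> R) :=
  \sum_s \sum_t (potts_weight s * K s t) * (a s * a t).

Lemma pi_form_mixture (K : S -> S -> R) (b : {set {set T}} -> S -> S -> bool)
    (c : {set {set T}} -> R) (a : S -> R) :
  (forall s t, potts_weight s * K s t =
     \sum_(A in powerset E) edge_weight A * ((compatible A s && b A s t)%:R * c A)) ->
  pi_form K a = \sum_(A in powerset E) edge_weight A *
     (c A * \sum_(s | compatible A s) \sum_(t | b A s t) a s * a t).
Proof.
move=> HK; rewrite /pi_form.
under eq_bigr do under eq_bigr do rewrite HK big_distrl.
under eq_bigr do rewrite exchange_big.
rewrite exchange_big /=; apply: eq_bigr => A _.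
rewrite [RHS]mulrA [RHS]mulr_sumr [RHS]big_mkcond; apply: eq_bigr => s _ /=.
case: (compatible A s) => /=; last by rewrite big1 // => t _; rewrite !mul0r mulr0 mul0r.
rewrite [RHS]mulr_sumr [RHS]big_mkcond; apply: eq_bigr => t _ /=.
by case: (b A s t); rewrite ?mul0r ?mulr0 ?mul0r // mul1r mulrA.
Qed.

Lemma pi_form_SW a : pi_form (SW_kernel p E) a =
  \sum_(A in powerset E)
    edge_weight A * (q%:R ^- n_clusters A * (\sum_(s | compatible A s) a s) ^+ 2).
Proof.
rewrite (pi_form_mixture (b := fun A _ t => compatible A t) _ SW_joint).
apply: eq_bigr => A _; congr (_ * (_ * _)).
by rewrite expr2 big_distrl; apply: eq_bigr => s _; rewrite big_distrr.
Qed.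

Lemma pi_form_ISW a : pi_form (ISW_kernel p E) a =
  \sum_(A in powerset E) edge_weight A * (q%:R ^- n_isolated A *
    \sum_(s | compatible A s) \sum_(t | agree_off_isolated A s t) a s * a t).
Proof. exact: pi_form_mixture ISW_joint. Qed.

Lemma pi_form_SW_ge0 a : 0 <= pi_form (SW_kernel p E) a.
Proof.
rewrite pi_form_SW; apply: sumr_ge0 => A _.
by rewrite mulr_ge0 ?edge_weight_ge0 // mulr_ge0 ?sqr_ge0 // invr_ge0 exprn_ge0.
Qed.

Lemma pi_form_SW_le_ISW : (0 < q)%N ->
  forall a, pi_form (SW_kernel p E) a <= pi_form (ISW_kernel p E) a.
Proof.
move=> q_gt0 a; rewrite pi_form_SW pi_form_ISW; apply: ler_sum => A _.
by rewrite ler_wpM2l ?edge_weight_ge0 // cluster_form_le.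
Qed.

End EdwardsSokal.

Lemma cube_edges_pairs d L e :
  e \in cube_edges d L -> exists u v, u != v /\ e = [set u; v].
Proof.
rewrite inE => /existsP [u /existsP [v /andP [uv /eqP ->]]].
exists u, v; split => //; apply: contraTneq uv => <-.
apply/existsP => [[i /andP [+ _]]]; rewrite orbb => /eqP h.
exact: n_Sn _ (esym h).
Qed.

Lemma pi_form_kmx (R : realFieldType) (T : finType) (q : nat) (p : R)
    (E : {set {set T}}) (K : {ffun T -> 'I_q} -> {ffun T -> 'I_q} -> R)
    (a : 'I_#|{ffun T -> 'I_q}| -> R) :
  \sum_i \sum_j (potts_weight p E (enum_val i) * kmx K i j) * (a i * a j) =
  pi_form p E K (fun s => a (enum_rank s)).
Proof.
have reindex (F : {ffun T -> 'I_q} -> R) :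
    \sum_(i < #|{ffun T -> 'I_q}|) F (enum_val i) = \sum_s F s.
  by rewrite -(big_enum_val F).
rewrite /pi_form -reindex; apply: eq_bigr => i _; rewrite -reindex.
by apply: eq_bigr => j _; rewrite !mxE !enum_valK.
Qed.

Unset Implicit Arguments. Set Strict Implicit.

Theorem mainTheorem8 (R : rcfType) (q d L : nat) (p : R)
    (hq : (2 <= q)%N) (hd : (0 < d)%N) (hL : (0 < L)%N)
    (hp0 : 0 < p) (hp1 : p < 1) :
  exists gSW gI : R,
    [/\ spectral_gap_of
          (kmx (SW_kernel (T := {ffun 'I_d -> 'I_L}) (q := q) p (cube_edges d L)))
          gSW,
        spectral_gap_of
          (kmx (ISW_kernel (T := {ffun 'I_d -> 'I_L}) (q := q) p (cube_edges d L)))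
          gI &
        gI <= gSW].
Proof.
have q_gt0 : (0 < q)%N by apply: ltnW.
have hE := @cube_edges_pairs d L.
have n_gt1 : (1 < #|{ffun {ffun 'I_d -> 'I_L} -> 'I_q}|)%N.
  have cube_gt0 : (0 < L ^ d)%N by rewrite expn_gt0 hL.
  rewrite card_ffun card_ord card_ffun !card_ord -(prednK cube_gt0) expnS.
  by apply: leq_trans hq _; rewrite leq_pmulr // expn_gt0 q_gt0.
apply: (reversible_gap_le n_gt1 (w := fun i => potts_weight p (cube_edges d L) (enum_val i))).
- by move=> i; apply: potts_weight_gt0.
- by move=> i j; rewrite !mxE; apply: SW_reversible.
- by move=> i j; rewrite !mxE; apply: ISW_reversible.
- by move=> a; rewrite pi_form_kmx; apply: pi_form_SW_ge0.
- by move=> a; rewrite !pi_form_kmx; apply: pi_form_SW_le_ISW.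
Qed.
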